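(* Let $m\ge 2$ and let $H=\{0,h_1,\dots,h_{m-1}\}$ be a set of $m$ integers in which all the distances $h_1,\dots,h_{m-1}$ are even. Let $D=\gcd(h_1,\dots,h_{m-1})$ and let $c$ be a natural number all of whose prime divisors divide $D$. Put $c\cdot H=\{0,ch_1,\dots,ch_{m-1}\}$. Then $$\mathfrak{S}(c\cdot H)=\mathfrak{S}(H).$$
   Context: For a finite set $H$ of $m$ integers, $\nu_p(H)$ denotes the number of distinct residues modulo $p$ among the elements of $H$. The Selberg (singular series) constant is $$\mathfrak{S}(H)=\prod_{p}\Big(1-\frac{\nu_p(H)}{p}\Big)\Big(1-\frac1p\Big)^{-m},$$ where the product runs over all primes $p$. *)

From mathcomp Require Import all_boot all_order all_algebra.
From mathcomp Require Import all_classical all_reals all_analysis.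
Set Implicit Arguments. Unset Strict Implicit. Unset Printing Implicit Defensive.
Import Order.TTheory GRing.Theory Num.Theory numFieldNormedType.Exports.
Local Open Scope ring_scope.

(* A finite set H of integers is represented by a duplicate-free seq. *)
Definition nu (p : nat) (H : seq int) : nat :=
  size (undup [seq (x %% (p%:Z))%Z | x <- H]).

Definition sing_factor (R : realType) (H : seq int) (p : nat) : R :=
  (1 - (nu p H)%:R / p%:R) * ((1 - 1 / p%:R) ^- (size H)).

Definition sing_partial (R : realType) (H : seq int) (N : nat) : R :=
  \prod_(p < N | prime p) sing_factor R H p.

Definition singS (R : realType) (H : seq int) : R :=
  limn (sing_partial R H).

Definition gcd_seq (s : seq int) : int := \big[gcdz/0%Z]_(x <- s) x.

From mathcomp Require Import all_boot all_order all_algebra.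
From mathcomp Require Import all_classical all_reals all_analysis.
Import Order.TTheory GRing.Theory Num.Theory.
Local Open Scope ring_scope.

(* The identity holds prime by prime, already for the local factors. If p does
   not divide c, multiplication by c is a bijection on residues mod p, so
   nu_p(c.H) = nu_p(H). If p divides c, then p divides D, so H and c.H both lie
   in the single class 0 mod p. As |c.H| = |H|, the local factors agree, hence
   so do all partial products and their limits. *)

Lemma size_undup_map_in (T U V : eqType) (f : T -> U) (g : T -> V) (s : seq T) :
  {in s &, forall x y, (g x == g y) = (f x == f y)} ->
  size (undup (map g s)) = size (undup (map f s)).
Proof.
elim: s => [//|a s IHs] eq_fg /=.
have eq_fg_s : {in s &, forall x y, (g x == g y) = (f x == f y)}.
  by move=> x y xs ys; apply: eq_fg; rewrite inE ?xs ?ys orbT.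
have -> : (g a \in map g s) = (f a \in map f s).
  apply/mapP/mapP => -[y ys /eqP e]; exists y => //; apply/eqP;
    by [rewrite -eq_fg ?inE ?eqxx ?ys ?orbT | rewrite eq_fg ?inE ?eqxx ?ys ?orbT].
by case: ifP => _ /=; rewrite IHs.
Qed.

Lemma gcd_seq_dvdz (s : seq int) x : x \in s -> (gcd_seq s %| x)%Z.
Proof.
rewrite /gcd_seq; elim: s => [//|a s IHs]; rewrite inE big_cons => /orP[/eqP->|xs].
  exact: dvdz_gcdl.
exact: dvdz_trans (dvdz_gcdr _ _) (IHs xs).
Qed.

Lemma nu_map_in (f : int -> int) (p : nat) (H : seq int) :
  {in H &, forall x y, (f x == f y %[mod p%:Z])%Z = (x == y %[mod p%:Z])%Z} ->
  nu p (map f H) = nu p H.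
Proof.
by move=> f_mod; rewrite /nu -map_comp; apply: size_undup_map_in.
Qed.

Lemma nu_scale_coprime (c : int) (p : nat) (H : seq int) :
  coprimez p c -> nu p (map ( *%R c) H) = nu p H.
Proof.
by move=> cop_pc; apply: nu_map_in => x y _ _; rewrite !eqz_mod_dvd -mulrBr Gauss_dvdzr.
Qed.

Lemma nu_scale_dvd (c : int) (p : nat) (H : seq int) :
  (p%:Z %| c)%Z -> {in H, forall x, (p%:Z %| x)%Z} ->
  nu p (map ( *%R c) H) = nu p H.
Proof.
move=> p_c p_H; apply: nu_map_in => x y xH yH.
have p_xy : (p%:Z %| x - y)%Z by rewrite rpredB ?p_H.
by rewrite !eqz_mod_dvd -mulrBr dvdz_mull p_xy.
Qed.

Lemma nu_scale (c : int) (p : nat) (H : seq int) :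
  prime p -> {in H, forall x, (p%:Z %| c)%Z -> (p%:Z %| x)%Z} ->
  nu p (map ( *%R c) H) = nu p H.
Proof.
move=> p_pr p_H; have [p_c | p_nc] := boolP (p%:Z %| c)%Z.
  by apply: nu_scale_dvd => // x xH; apply: p_H.
by apply: nu_scale_coprime; rewrite coprimezE prime_coprime.
Qed.

Lemma sing_factor_scale (R : realType) (c : int) (p : nat) (H : seq int) :
  prime p -> {in H, forall x, (p%:Z %| c)%Z -> (p%:Z %| x)%Z} ->
  sing_factor R (map ( *%R c) H) p = sing_factor R H p.
Proof. by move=> p_pr p_H; rewrite /sing_factor nu_scale // size_map. Qed.

Theorem mainTheorem1 (R : realType) (h : seq int) (c : nat) :
  (2 <= (size h).+1)%N ->
  uniq (0%Z :: h) ->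
  (forall x, x \in h -> (2 %| x)%Z) ->
  (0 < c)%N ->
  (forall p : nat, prime p -> (p %| c)%N -> ((p%:Z) %| gcd_seq h)%Z) ->
  singS R (0%Z :: [seq (c%:Z * x)%R | x <- h]) = singS R (0%Z :: h).
Proof.
move=> _ _ _ _ p_c_gcd.
have -> : 0%Z :: [seq (c%:Z * x)%R | x <- h] = map ( *%R c%:Z) (0%Z :: h).
  by rewrite /= mulr0.
rewrite /singS; suff -> : sing_partial R (map ( *%R c%:Z) (0%Z :: h)) =
                         sing_partial R (0%Z :: h) by [].
apply: funext => N; apply: eq_bigr => p p_pr; apply: sing_factor_scale => // x.
rewrite inE => /orP[/eqP-> _|xh p_c]; first exact: dvdz0.
apply: (dvdz_trans (p_c_gcd p p_pr p_c)); exact: gcd_seq_dvdz.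
Qed.
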